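(* Let $\mathcal T=(T,\rho)$ be a rooted tree. The map $F_{\mathcal T}:\mathbb R^{\mathcal T}\to\mathbb R^{\mathcal T}$ is a homeomorphism and restricts to a homeomorphism from the smoothed to the rectilinear arboreal hypersurface, $F_{\mathcal T}:\mathsf H_{\mathcal T}\xrightarrow{\sim}H_{\mathcal T}$, satisfying $F_{\mathcal T}(\mathsf Q_\alpha)=Q_\alpha$ and $F_{\mathcal T}(\mathsf H_\alpha)=H_\alpha$ for all $\alpha\in V(T)$.
   Context: Rooted tree $\mathcal T=(T,\rho)$: a tree (nonempty finite connected acyclic graph) with root vertex $\rho$. Partial order on $V(T)$: $\alpha\le\beta$ iff $\alpha$ lies on the unique minimal path from $\rho$ to $\beta$; each $\alpha\ne\rho$ has a parent $\hat\alpha$ (adjacent, $\hat\alpha<\alpha$). $\mathbb R^{\mathcal T}=\mathbb R^{V(T)}$ with coordinates $x_\gamma$. Rectilinear: $Q_\alpha=\{x_\beta\ge0\text{ for all }\beta\le\alpha\}$, $H_\alpha=\partial Q_\alpha$, $H_{\mathcal T}=\bigcup_\alpha H_\alpha$. Smoothed: fix a $C^1$ function $b:\mathbb R_{>0}\to\mathbb R$ with $b\le0$, $\lim_{t\to0}b(t)=0$, $\lim_{t\to0}b'(t)=-\infty$, $b(t)=0$ for $t\gg0$, and a $C^1$ submersion $f:\mathbb R^2\to\mathbb R$ with $\{f=0\}=\{x_1=0,x_2\ge0\}\cup\{x_1>0,x_2=b(x_1)\}$, $\{f>0\}=\{x_1>0,x_2>b(x_1)\}$, $\{f<0\}=\{x_1<0\}\cup\{x_1=0,x_2<0\}\cup\{x_1>0,x_2<b(x_1)\}$.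 Set $h_\rho=x_\rho$, $h_\alpha=f(h_{\hat\alpha},x_\alpha)$ for $\alpha\ne\rho$; $\mathsf Q_\alpha=\{h_\alpha\ge0\}$, $\mathsf H_\alpha=\{h_\alpha=0\}$, $\mathsf H_{\mathcal T}=\bigcup_\alpha\mathsf H_\alpha$. Comparison map: $\varphi:\mathbb R^2\to\mathbb R$, $\varphi(x_1,x_2)=x_2$ if $x_1\le0$ and $x_2-b(x_1)$ if $x_1>0$. Set $F_\rho=x_\rho$, $F_\alpha=\varphi(h_{\hat\alpha},x_\alpha)$ for $\alpha\ne\rho$, and $F_{\mathcal T}=\{F_\alpha\}_{\alpha\in V(T)}:\mathbb R^{\mathcal T}\to\mathbb R^{\mathcal T}$. *)

From HB Require Import structures.
From mathcomp Require Import all_boot all_order all_algebra.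
From mathcomp Require Import all_classical all_reals all_analysis.
Set Implicit Arguments. Unset Strict Implicit. Unset Printing Implicit Defensive.
Import Order.TTheory GRing.Theory Num.Theory.
Import numFieldNormedType.Exports.
Local Open Scope classical_set_scope.
Local Open Scope ring_scope.

(* A rooted tree (T, rho) on the finite vertex type V is encoded by its parent
   map [par] : every vertex alpha <> rho has parent [par alpha] (the edges of
   T are exactly {alpha, par alpha}, alpha <> rho); [par rho = rho] by
   convention, and every vertex reaches the root by iterating [par]
   (connectedness/acyclicity). *)
Definition is_rooted_tree (V : finType) (rho : V) (par : V -> V) : Prop :=
  par rho = rho /\ forall v : V, exists n : nat, iter n par v = rho.

(* alpha <= beta iff alpha lies on the path from rho to beta, i.e. alpha is
   an iterated parent of beta *)
Definition tle (V : finType) (par : V -> V) (alpha beta : V) : Prop :=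
  exists n : nat, iter n par beta = alpha.

Section Data.
Variable R : realType.

(* b : R_{>0} -> R is C^1, b <= 0, b(t) -> 0 and b'(t) -> -oo as t -> 0+,
   b(t) = 0 for t large.  (Values of b at t <= 0 are irrelevant.) *)
Definition admissible_b (b : R -> R) : Prop :=
  (forall t : R, 0 < t -> derivable b t 1) /\
  (forall t : R, 0 < t -> {for t, continuous (derive1 b)}) /\
  (forall t : R, 0 < t -> b t <= 0) /\
  (b x @[x --> 0^'+] --> 0) /\
  (derive1 b x @[x --> 0^'+] --> -oo) /\
  (exists M : R, forall t : R, M < t -> b t = 0).

Definition admissible_f (b : R -> R) (f : R * R -> R) : Prop :=
  (forall p : R * R, differentiable f p) /\
  (forall v : R * R, continuous (fun p : R * R => 'D_v f p)) /\
  (forall p : R * R, exists v : R * R, 'd f p v != 0) /\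
  (forall x1 x2 : R, f (x1, x2) = 0 <->
      (x1 = 0 /\ 0 <= x2) \/ (0 < x1 /\ x2 = b x1)) /\
  (forall x1 x2 : R, 0 < f (x1, x2) <-> (0 < x1 /\ b x1 < x2)) /\
  (forall x1 x2 : R, f (x1, x2) < 0 <->
      x1 < 0 \/ (x1 = 0 /\ x2 < 0) \/ (0 < x1 /\ x2 < b x1)).

Definition phi (b : R -> R) (x1 x2 : R) : R :=
  if x1 <= 0 then x2 else x2 - b x1.

Variables (V : finType) (rho : V) (par : V -> V).

Definition Qrect (alpha : V) : set {ptws V -> R} :=
  [set x | forall beta, tle par beta alpha -> 0 <= x beta].
Definition Hrect (alpha : V) : set {ptws V -> R} :=
  closure (Qrect alpha) `\` interior (Qrect alpha).
Definition HrectT : set {ptws V -> R} := \bigcup_(alpha in [set: V]) Hrect alpha.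

(* smoothed: h_rho = x_rho, h_alpha = f(h_{parent alpha}, x_alpha);
   computed by recursion with fuel #|V| (>= depth + 1 of every vertex) *)
Fixpoint hfuel (f : R * R -> R) (n : nat) (alpha : V) (x : {ptws V -> R}) : R :=
  match n with
  | 0 => x alpha
  | n'.+1 => if alpha == rho then x rho
             else f (hfuel f n' (par alpha) x, x alpha)
  end.
Definition h (f : R * R -> R) (alpha : V) (x : {ptws V -> R}) : R :=
  hfuel f #|V| alpha x.

Definition Qsm (f : R * R -> R) (alpha : V) : set {ptws V -> R} :=
  [set x | 0 <= h f alpha x].
Definition Hsm (f : R * R -> R) (alpha : V) : set {ptws V -> R} :=
  [set x | h f alpha x = 0].
Definition HsmT (f : R * R -> R) : set {ptws V -> R} :=
  \bigcup_(alpha in [set: V]) Hsm f alpha.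

Definition FT (b : R -> R) (f : R * R -> R) (x : {ptws V -> R}) : {ptws V -> R} :=
  fun alpha => if alpha == rho then x rho
               else phi b (h f (par alpha) x) (x alpha).

End Data.

Definition homeomorphism (X Y : topologicalType) (F : X -> Y) : Prop :=
  exists G : Y -> X,
    cancel F G /\ cancel G F /\ continuous F /\ continuous G.

From HB Require Import structures.
From mathcomp Require Import all_boot all_order all_algebra.
From mathcomp Require Import all_classical all_reals all_analysis.
From mathcomp Require Import zify lra.
Import Order.TTheory GRing.Theory Num.Theory.
Import numFieldNormedType.Exports.
Local Open Scope classical_set_scope.
Local Open Scope ring_scope.

Set Implicit Arguments.
Unset Strict Implicit.
Unset Printing Implicit Defensive.

(* Write [bext] for [b] extended by 0 to the nonpositive reals, so that
   [phi u v = v - bext u].  The sign conditions on [f] then say that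
   [0 <= f (u, v)] iff [0 <= u] and [0 <= phi u v], with [f (u, v) = 0] iff
   moreover [u = 0] or [phi u v = 0].  As the coordinates of [F_T x] are
   [phi (h_(parent alpha) x) (x alpha)], induction from the root turns
   [0 <= h_alpha x] into [F_T x \in Q_alpha], and [h_alpha x = 0] into
   "[F_T x \in Q_alpha] and some coordinate [beta <= alpha] of [F_T x]
   vanishes", which is [F_T x \in H_alpha].  The map [F_T] is triangular along
   the tree and is inverted coordinate by coordinate by [v = phi_inv u (phi u v)],
   the smoothed functions of the preimage satisfying the same recursion for a
   modified [f].  Both maps are continuous because [bext] is, which is where
   [b t -> 0] as [t -> 0+] is used. *)

Lemma continuous_ptws (I : Type) (T Y : topologicalType) (g : T -> {ptws I -> Y}) :
  (forall i, continuous (fun t => g t i)) -> continuous g.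
Proof.
move=> gc t; apply/cvg_sup => i A.
rewrite nbhsE => -[B [[C oC <-] Bs] sBA].
by apply: filterS sBA _; apply: (gc i t C); apply: open_nbhs_nbhs.
Qed.

Lemma continuous_comp_pair (T X Y Z : topologicalType) (g : X * Y -> Z)
    (u : T -> X) (v : T -> Y) :
  continuous g -> continuous u -> continuous v -> continuous (fun t => g (u t, v t)).
Proof.
move=> gc uc vc t.
apply: (@continuous2_cvg _ _ _ _ _ _ u v (fun x y => g (x, y))); [|exact: uc|exact: vc].
have -> : (fun z => g (z.1, z.2)) = g by apply: funext => -[].
exact (gc (u t, v t)).
Qed.

Section RootedTree.
Variables (V : finType) (rho : V) (par : V -> V).
Hypothesis par_root : par rho = rho.
Hypothesis reach_root : forall v, exists n, iter n par v = rho.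

Lemma depth_lt_card v : exists2 d, (d < #|V|)%N & iter d par v = rho.
Proof.
(* For the least such [d], the iterates [0, ..., d] of [par] at [v] are
   pairwise distinct. *)
have ex_depth : exists n, iter n par v == rho.
  by have [n hn] := reach_root v; exists n; apply/eqP.
case: (ex_minnP ex_depth) => d /eqP Hd d_min; exists d => //.
have no_cycle i j : (i < j <= d)%N -> iter i par v != iter j par v.
  case/andP=> ij jd; apply/eqP => E.
  have : iter (d - j + i) par v == rho by rewrite iterD E -iterD subnK // Hd.
  by move/d_min; lia.
have inj : injective (fun i : 'I_d.+1 => iter i par v).
  move=> i j /= Eij; apply/val_inj => /=.
  have := ltn_ord i; have := ltn_ord j => hj hi.
  case: (ltngtP i j) => // ij; [move: (no_cycle i j) | move: (no_cycle j i)];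
    by rewrite Eij eqxx; lia.
by have := leq_card _ inj; rewrite card_ord.
Qed.

Lemma tree_ind (P : V -> Prop) :
  P rho -> (forall a, a != rho -> P (par a) -> P a) -> forall a, P a.
Proof.
move=> P_root P_par a; have [n] := reach_root a.
elim: n a => [|n IH] a /= Ha; first by rewrite Ha.
have [->//|a_root] := eqVneq a rho.
by apply: P_par a_root _; apply: IH; rewrite -iterSr.
Qed.

Lemma tle_root beta : tle par beta rho <-> beta = rho.
Proof. by split=> [[n]|->]; [rewrite iter_fix|exists 0%N]. Qed.

Lemma tle_par beta a : tle par beta a <-> beta = a \/ tle par beta (par a).
Proof.
split=> [[[|n] <-]|[->|[n <-]]]; first by left.
- by right; exists n; rewrite -iterSr.
- by exists 0%N.
- by exists n.+1; rewrite iterSr.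
Qed.

Section SmoothedRecursion.
Variables (R : realType) (f : R * R -> R).

Lemma hfuel_stable n a (x : {ptws V -> R}) : iter n par a = rho ->
  forall m, (n <= m)%N -> hfuel rho par f m.+1 a x = hfuel rho par f n.+1 a x.
Proof.
elim: n a => [|n IH] a /= Ha m nm; first by rewrite Ha eqxx.
case: eqP => // _; case: m nm => // m nm.
by rewrite (IH (par a)) // -iterSr.
Qed.

Lemma h_root x : h rho par f rho x = x rho.
Proof.
have [n nV _] := depth_lt_card rho.
by rewrite /h; case: #|V| nV => [|k] //= _; rewrite eqxx.
Qed.

Lemma h_par a x :
  a != rho -> h rho par f a x = f (h rho par f (par a) x, x a).
Proof.
move=> a_root; have [[|n] nV Hn] := depth_lt_card a.
  by move: a_root; rewrite -Hn eqxx.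
rewrite iterSr in Hn; rewrite /h.
have stable m : (n <= m)%N ->
    hfuel rho par f m.+1 (par a) x = hfuel rho par f n.+1 (par a) x.
  exact: hfuel_stable.
case: #|V| nV => [|[|m]] // nV.
transitivity (f (hfuel rho par f m.+1 (par a) x, x a)).
  by rewrite /= (negbTE a_root).
by rewrite !stable //; lia.
Qed.

Lemma h_continuous a : continuous f -> continuous (h rho par f a).
Proof.
move=> f_cont; move: a; apply: tree_ind => [|a a_root IH].
  have -> : h rho par f rho = fun x : {ptws V -> R} => x rho.
    by apply: funext => x; rewrite h_root.
  exact: (@proj_continuous _ (fun=> R)).
have -> : h rho par f a = fun x : {ptws V -> R} => f (h rho par f (par a) x, x a).
  by apply: funext => x; rewrite h_par.
exact: continuous_comp_pair f_cont IH (@proj_continuous _ (fun=> R) a).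
Qed.

End SmoothedRecursion.

Section Rectilinear.
Variable R : realType.
Local Notation PT := {ptws V -> R}.

Definition Zrect (alpha : V) : set PT :=
  [set y | exists2 beta, tle par beta alpha & y beta = 0].

Lemma Qrect_root (y : PT) : Qrect par rho y <-> 0 <= y rho.
Proof.
split=> [|y0 beta /tle_root -> //].
by apply; apply/tle_root.
Qed.

Lemma Qrect_par (y : PT) a : Qrect par a y <-> 0 <= y a /\ Qrect par (par a) y.
Proof.
split=> [ya | [ya0 ypa] beta /tle_par [-> // | /ypa //]].
by split=> [|beta ba]; apply: ya; apply/tle_par; [left | right].
Qed.

Lemma Zrect_root (y : PT) : Zrect rho y <-> y rho = 0.
Proof.
split=> [[beta /tle_root -> //] | y0].
by exists rho => //; apply/tle_root.
Qed.

Lemma Zrect_par (y : PT) a : Zrect a y <-> y a = 0 \/ Zrect (par a) y.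
Proof.
split=> [[beta /tle_par [-> | ba] y0] | [ya0 | [beta ba y0]]].
- by left.
- by right; exists beta.
- by exists a => //; apply/tle_par; left.
- by exists beta => //; apply/tle_par; right.
Qed.

Lemma closed_Qrect a : closed (Qrect par a : set PT).
Proof.
have -> : Qrect par a = \bigcap_(beta in tle par ^~ a)
    ((fun y : PT => y beta) @^-1` [set t | 0 <= t]).
  by apply/seteqP; split=> y yQ beta /yQ.
apply: closed_bigI => beta _; apply: preimage_closed; last exact: closed_ge.
by move=> y _; apply: (@proj_continuous _ (fun=> R)).
Qed.

Lemma interior_Qrect a (y : PT) :
  (Qrect par a)° y <-> forall beta, tle par beta a -> 0 < y beta.
Proof.
split=> [yQ beta ba | y_gt0].
- have := nbhs_singleton yQ beta ba; rewrite le_eqVlt => /predU1P[y0 | //].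
  have y_shift : dfwith y beta 0 = y.
    by apply: functional_extensionality_dep => j; case: dfwithP.
  have Qnear : \forall t \near 0, Qrect par a (dfwith y beta t).
    by apply: (@dfwith_continuous _ (fun=> R) y beta 0); rewrite y_shift.
  have : \forall t \near 0^'-, Qrect par a (dfwith y beta t).
    by apply: filterS Qnear => t Qt _.
  move=> /(filterI (nbhs_left_lt 0)) /filter_ex [t [t_lt0 /(_ beta ba)]].
  by rewrite dfwithin leNgt t_lt0.
- have : \forall z \near y, forall beta, tle par beta a -> 0 < z beta.
    apply: (@filter_forall PT V (fun beta (z : PT) => tle par beta a -> 0 < z beta)
      _ (nbhs_filter y)) => beta.
    have [ba | nba] := pselect (tle par beta a).
    + have := @proj_continuous _ (fun=> R) beta y _ (lt_nbhsr (y_gt0 beta ba)).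
      by apply: (@filterS _ (nbhs y)) => z z_gt0 _.
    + by apply: nearW => z /nba.
  move=> yN; apply: (@filterS _ (nbhs y) _ _ _ _ yN) => z z_gt0 beta.
  by move/z_gt0/ltW.
Qed.

Lemma HrectP a (y : PT) : Hrect par a y <-> Qrect par a y /\ Zrect a y.
Proof.
rewrite /Hrect -(closure_id _).1; last exact: closed_Qrect.
split=> -[yQ yZ]; split=> //.
- apply: contrapT => noZ; apply: yZ; apply/interior_Qrect => beta ba.
  have := yQ beta ba; rewrite le_eqVlt => /predU1P[y0 | //].
  by case: noZ; exists beta.
- by case: yZ => beta ba y0 /interior_Qrect/(_ beta ba); rewrite y0 ltxx.
Qed.

End Rectilinear.

Section ComparisonMap.
Variables (R : realType) (b : R -> R) (f : R * R -> R).
Local Notation PT := {ptws V -> R}.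
Local Notation F := (FT rho par b f).

Definition bext (t : R) : R := if t <= 0 then 0 else b t.

Lemma phiE u v : phi b u v = v - bext u.
Proof. by rewrite /phi /bext; case: ifP; rewrite ?subr0. Qed.

Lemma FT_root x : F x rho = x rho.
Proof. by rewrite /FT /= eqxx. Qed.

Lemma FT_par x a : a != rho -> F x a = phi b (h rho par f (par a) x) (x a).
Proof. by rewrite /FT /= => /negbTE ->. Qed.

Definition phi_inv (u v : R) : R := v + bext u.

Lemma phiK u : cancel (phi b u) (phi_inv u).
Proof. by move=> v; rewrite /phi_inv phiE subrK. Qed.

Lemma phi_invK u : cancel (phi_inv u) (phi b u).
Proof. by move=> v; rewrite phiE /phi_inv addrK. Qed.

Definition f_unphi (p : R * R) : R := f (p.1, phi_inv p.1 p.2).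

Definition FTinv (y : PT) : PT := fun a =>
  if a == rho then y rho else phi_inv (h rho par f_unphi (par a) y) (y a).

Lemma FTinv_root y : FTinv y rho = y rho.
Proof. by rewrite /FTinv /= eqxx. Qed.

Lemma FTinv_par y a :
  a != rho -> FTinv y a = phi_inv (h rho par f_unphi (par a) y) (y a).
Proof. by rewrite /FTinv /= => /negbTE ->. Qed.

Lemma h_FTinv y a : h rho par f a (FTinv y) = h rho par f_unphi a y.
Proof.
move: a; apply: tree_ind => [|a a_root IH]; first by rewrite !h_root FTinv_root.
by rewrite !(h_par _ _ a_root) IH FTinv_par.
Qed.

Lemma h_unphi_FT x a : h rho par f_unphi a (F x) = h rho par f a x.
Proof.
move: a; apply: tree_ind => [|a a_root IH]; first by rewrite !h_root FT_root.
by rewrite !(h_par _ _ a_root) IH FT_par // /f_unphi /= phiK.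
Qed.

Lemma FTK : cancel F FTinv.
Proof.
move=> x; apply: funext => a; have [->|a_root] := eqVneq a rho.
  by rewrite FTinv_root FT_root.
by rewrite FTinv_par // h_unphi_FT FT_par // phiK.
Qed.

Lemma FTinvK : cancel FTinv F.
Proof.
move=> y; apply: funext => a; have [->|a_root] := eqVneq a rho.
  by rewrite FT_root FTinv_root.
by rewrite FT_par // h_FTinv FTinv_par // phi_invK.
Qed.

Lemma image_FT (A B : set PT) : (forall x, A x <-> B (F x)) -> F @` A = B.
Proof.
move=> AB; have -> : A = F @^-1` B by apply/seteqP; split=> x /AB.
apply: image_preimage; apply/seteqP; split=> // y _.
by exists (FTinv y) => //; apply: FTinvK.
Qed.

Section SignConditions.
Hypothesis f_eq0_iff : forall x1 x2 : R, f (x1, x2) = 0 <->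
  (x1 = 0 /\ 0 <= x2) \/ (0 < x1 /\ x2 = b x1).
Hypothesis f_gt0_iff : forall x1 x2 : R, 0 < f (x1, x2) <-> (0 < x1 /\ b x1 < x2).

Lemma f_ge0 u v : 0 <= f (u, v) <-> 0 <= u /\ 0 <= phi b u v.
Proof.
rewrite le_eqVlt eq_sym -(rwP orP) -(rwP eqP) f_eq0_iff f_gt0_iff /phi.
by case: ifP => u0; split=> ?; lra.
Qed.

Lemma f_eq0 u v :
  f (u, v) = 0 <-> 0 <= u /\ 0 <= phi b u v /\ (u = 0 \/ phi b u v = 0).
Proof. by rewrite f_eq0_iff /phi; case: ifP => u0; split=> ?; lra. Qed.

Lemma h_ge0_Qrect x a : 0 <= h rho par f a x <-> Qrect par a (F x).
Proof.
move: a; apply: tree_ind => [|a a_root IH].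
  by rewrite h_root Qrect_root FT_root.
by rewrite (h_par _ _ a_root) (f_ge0 _ _) IH (Qrect_par _ a) FT_par //; tauto.
Qed.

Lemma h_eq0_Hrect x a : h rho par f a x = 0 <-> Hrect par a (F x).
Proof.
rewrite HrectP; move: a; apply: tree_ind => [|a a_root IH].
  by rewrite h_root Qrect_root Zrect_root FT_root; split=> [->|[]].
rewrite (h_par _ _ a_root) (f_eq0 _ _) (h_ge0_Qrect _ _) IH.
by rewrite (Qrect_par _ a) (Zrect_par _ a) FT_par //; tauto.
Qed.

Lemma image_Qsm a : F @` Qsm rho par f a = Qrect par a.
Proof. by apply: image_FT => x; apply: h_ge0_Qrect. Qed.

Lemma image_Hsm a : F @` Hsm rho par f a = Hrect par a.
Proof. by apply: image_FT => x; apply: h_eq0_Hrect. Qed.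

Lemma image_HsmT : F @` HsmT rho par f = HrectT par.
Proof. by rewrite image_bigcup; apply: eq_bigcupr => a _; apply: image_Hsm. Qed.

End SignConditions.

Section Continuity.
Hypothesis b_continuous : forall t, 0 < t -> {for t, continuous b}.
Hypothesis b_cvg0 : b x @[x --> 0^'+] --> 0.
Hypothesis f_continuous : continuous f.

Lemma bext_continuous : continuous bext.
Proof.
move=> t; have [t_lt0 | t_gt0 | ->] := ltgtP t 0.
- apply: (cvg_near_cst (bext t)); apply: (@filterS _ (nbhs t)) (lt_nbhsl t_lt0).
  by move=> s s_lt0; rewrite /bext !ifT // ltW.
- have b_bext : {near t, b =1 bext}.
    apply: (@filterS _ (nbhs t)) (lt_nbhsr t_gt0).
    by move=> s s_gt0; rewrite /bext leNgt s_gt0.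
  apply: cvg_trans (near_eq_cvg b_bext) _.
  by rewrite /bext leNgt t_gt0; exact: b_continuous.
- apply/left_right_continuousP; split.
  + apply: (cvg_near_cst (bext 0)); apply: (@filterS _ (0^'-)) (nbhs_left_le 0).
    by move=> s s_le0; rewrite /bext s_le0 lexx.
  + have b_bext : {near 0^'+, b =1 bext}.
      apply: (@filterS _ (0^'+)) (nbhs_right_gt 0).
      by move=> s s_gt0; rewrite /bext leNgt s_gt0.
    by rewrite /bext lexx; exact: cvg_trans (near_eq_cvg b_bext) b_cvg0.
Qed.

Lemma phi_inv_continuous : continuous (fun p : R * R => phi_inv p.1 p.2).
Proof.
move=> p; apply: cvgD; first exact: cvg_snd.
by apply: continuous_comp; [exact: cvg_fst | exact: bext_continuous].
Qed.

Lemma phi_continuous : continuous (fun p : R * R => phi b p.1 p.2).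
Proof.
have -> : (fun p : R * R => phi b p.1 p.2) = fun p => p.2 - bext p.1.
  by apply: funext => p; rewrite phiE.
move=> p; apply: cvgB; first exact: cvg_snd.
by apply: continuous_comp; [exact: cvg_fst | exact: bext_continuous].
Qed.

Lemma FT_continuous : continuous F.
Proof.
apply: continuous_ptws => a; have [->|a_root] := eqVneq a rho.
  have -> : (fun x => F x rho) = fun x : PT => x rho.
    by apply: funext => x; rewrite FT_root.
  exact: (@proj_continuous _ (fun=> R)).
have -> : (fun x => F x a) = fun x : PT => phi b (h rho par f (par a) x) (x a).
  by apply: funext => x; rewrite FT_par.
exact (continuous_comp_pair phi_continuous (h_continuous f_continuous)
  (@proj_continuous _ (fun=> R) a)).
Qed.

Lemma FTinv_continuous : continuous FTinv.
Proof.
have f_unphi_continuous : continuous f_unphi.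
  exact (continuous_comp_pair f_continuous (fun p => cvg_fst) phi_inv_continuous).
apply: continuous_ptws => a; have [->|a_root] := eqVneq a rho.
  have -> : (fun y => FTinv y rho) = fun y : PT => y rho.
    by apply: funext => y; rewrite FTinv_root.
  exact: (@proj_continuous _ (fun=> R)).
have -> : (fun y => FTinv y a) = fun y : PT => phi_inv (h rho par f_unphi (par a) y) (y a).
  by apply: funext => y; rewrite FTinv_par.
exact (continuous_comp_pair phi_inv_continuous (h_continuous f_unphi_continuous)
  (@proj_continuous _ (fun=> R) a)).
Qed.

Lemma FT_homeomorphism : homeomorphism F.
Proof.
exists FTinv; split; first exact: FTK.
by split; [exact: FTinvK | split; [exact: FT_continuous | exact: FTinv_continuous]].
Qed.

End Continuity.
End ComparisonMap.
End RootedTree.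

Theorem proposition3p13 (R : realType) (b : R -> R) (f : R * R -> R)
  (V : finType) (rho : V) (par : V -> V) :
  admissible_b b -> admissible_f b f -> is_rooted_tree rho par ->
  let F := FT rho par b f in
  homeomorphism F /\
  F @` HsmT rho par f = HrectT (R:=R) par /\
  (forall alpha : V,
     F @` Qsm rho par f alpha = Qrect (R:=R) par alpha /\
     F @` Hsm rho par f alpha = Hrect (R:=R) par alpha).
Proof.
move=> [b_der [_ [_ [b_cvg0 _]]]] [f_diff [_ [_ [f_eq0_iff [f_gt0_iff _]]]]]
  [par_root reach_root] F.
have b_cont t : 0 < t -> {for t, continuous b}.
  by move=> /b_der/derivable1_diffP; apply: differentiable_continuous.
have f_cont : continuous f by move=> p; apply: differentiable_continuous.
split; first exact: (FT_homeomorphism reach_root b_cont b_cvg0 f_cont).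
split; first exact: (image_HsmT par_root reach_root f_eq0_iff f_gt0_iff).
by move=> a; rewrite (image_Qsm par_root reach_root f_eq0_iff f_gt0_iff)
  (image_Hsm par_root reach_root f_eq0_iff f_gt0_iff).
Qed.
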